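(* Let $Z\subseteq(\mathbb P^1)^d$ be the common vanishing locus of the multi-homogenizations $P^h$ of all linear forms $P=\sum_{\lambda\in\Phi^+}c_\lambda x_\lambda$ vanishing on $\mathfrak h$ (i.e. with $\sum_\lambda c_\lambda\lambda=0$). Then $Z=\bar{\mathfrak h}$ as sets.
   Context: Let $\mathfrak g$ be a complex semisimple Lie algebra, $\mathfrak h$ a Cartan subalgebra, $\Phi\subset\mathfrak h^*$ its root system, $\Phi^+$ a fixed set of positive roots, $d=|\Phi^+|$. Identify $\mathbb C$ with $\{[x_0:x_1]:x_0\ne0\}\subset\mathbb P^1$ via $c\mapsto[1:c]$, $\infty=[0:1]$, and write points of $(\mathbb P^1)^d$ as $(x_\lambda)_{\lambda\in\Phi^+}$, $x_\lambda=[x_{\lambda,0}:x_{\lambda,1}]$. Identify $\mathfrak h$ with its image under the injective linear map $h\mapsto(\lambda(h))_{\lambda\in\Phi^+}\in\mathbb C^d\subset(\mathbb P^1)^d$; $\bar{\mathfrak h}$ (the wonderful compactification of $\mathfrak h$) denotes the Zariski closure of $\mathfrak h$ in $(\mathbb P^1)^d$. For a linear form $P$ with support $\mathrm{supp}(P)=\{\lambda:c_\lambda\ne0\}$, $P^h=\sum_{\lambda\in\mathrm{supp}P}c_\lambda x_{\lambda,1}\prod_{\mu\in\mathrm{supp}P,\mu\ne\lambda}x_{\mu,0}$. *)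

From HB Require Import structures.
From mathcomp Require Import all_boot all_order all_algebra.
From mathcomp Require Import reals.
From mathcomp Require Import complex.
From mathcomp Require Import mpoly.

Set Implicit Arguments.
Unset Strict Implicit.
Unset Printing Implicit Defensive.

Import Order.TTheory GRing.Theory Num.Theory.
Local Open Scope ring_scope.

Section RootSystems.
Variables (R : realType) (n : nat).

Definition dotv (u v : 'rV[R]_n) : R := (u *m v^T) 0 0.

Definition cartan (b a : 'rV[R]_n) : R := 2 * dotv b a / dotv a a.

(** These are exactly
    the root systems of the complex semisimple Lie algebras of rank n. *)
Definition is_root_system (Phi : seq 'rV[R]_n) : Prop :=
  [/\ uniq Phi /\ 0 \notin Phi,
      (<<Phi>>%VS = fullv),
      (forall a b, a \in Phi -> b \in Phi -> b - cartan b a *: a \in Phi),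
      (forall a b, a \in Phi -> b \in Phi -> cartan b a \is a Num.int) &
      (forall a (c : R), a \in Phi -> c *: a \in Phi -> c = 1 \/ c = -1)].

Definition regular_for (Phi : seq 'rV[R]_n) (f : 'rV[R]_n) : Prop :=
  forall a, a \in Phi -> dotv f a != 0.

Definition pos_roots (Phi : seq 'rV[R]_n) (f : 'rV[R]_n) : seq 'rV[R]_n :=
  [seq a <- Phi | 0 < dotv f a].

(** Complexification: h = C^n, h^* = C^n, and a root a acts on h by
    a(h) = sum_j a_j h_j. *)
Definition root_eval (a : 'rV[R]_n) (h : 'rV[R[i]]_n) : R[i] :=
  \sum_(j < n) Complex (a 0 j) 0 * h 0 j.

End RootSystems.

Section P1d.
Variables (C : comNzRingType) (d : nat).

(** Points of (P^1)^d are represented by families of homogeneous coordinates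
    x : 'I_d -> C * C, x_lambda = [x_{lambda,0} : x_{lambda,1}], each pair
    nonzero.  All predicates below are invariant under rescaling each pair. *)
Definition P1d_point (x : 'I_d -> C * C) : Prop :=
  forall i, (x i).1 != 0 \/ (x i).2 != 0.

(** Variables of the coordinate ring: x_{i,0} is variable 2i,
    x_{i,1} is variable 2i+1, in {mpoly C[d.*2]}. *)
Lemma var0_proof (i : 'I_d) : (i.*2 < d.*2)%N.
Proof. by rewrite ltn_double. Qed.
Lemma var1_proof (i : 'I_d) : (i.*2.+1 < d.*2)%N.
Proof. by rewrite -doubleS leq_double. Qed.
Definition var0 (i : 'I_d) : 'I_(d.*2) := Ordinal (var0_proof i).
Definition var1 (i : 'I_d) : 'I_(d.*2) := Ordinal (var1_proof i).

Lemma half_proof (k : 'I_(d.*2)) : (k./2 < d)%N.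
Proof. by rewrite ltn_half_double. Qed.
Definition pair_of (k : 'I_(d.*2)) : 'I_d := Ordinal (half_proof k).

Definition coords (x : 'I_d -> C * C) (k : 'I_(d.*2)) : C :=
  if odd k then (x (pair_of k)).2 else (x (pair_of k)).1.

Definition multihomog (e : 'I_d -> nat) (p : {mpoly C[d.*2]}) : Prop :=
  forall m, m \in msupp p -> forall i, (m (var0 i) + m (var1 i))%N = e i.

Definition in_zariski_closure (S : ('I_d -> C * C) -> Prop)
    (x : 'I_d -> C * C) : Prop :=
  forall (e : 'I_d -> nat) (p : {mpoly C[d.*2]}), multihomog e p ->
    (forall y, S y -> p.@[coords y] = 0) -> p.@[coords x] = 0.

Definition mhomogenize (c : 'I_d -> C) : {mpoly C[d.*2]} :=
  \sum_(i | c i != 0)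
     c i *: ('X_(var1 i) * \prod_(j | (c j != 0) && (j != i)) 'X_(var0 j)).

Definition affine_pt (v : 'I_d -> C) : 'I_d -> C * C := fun i => (1, v i).

End P1d.

Section Main.
Variables (R : realType) (n : nat) (Phi : seq 'rV[R]_n) (f : 'rV[R]_n).

Local Notation Phip := (pos_roots Phi f).
Local Notation d := (size Phip).

Definition proot (i : 'I_d) : 'rV[R]_n := nth 0 Phip i.

Definition h_embed (h : 'rV[R[i]]_n) : 'I_d -> R[i] * R[i] :=
  affine_pt (fun i => root_eval (proot i) h).

Definition h_image (x : 'I_d -> R[i] * R[i]) : Prop :=
  exists h, x = h_embed h.

Definition in_hbar (x : 'I_d -> R[i] * R[i]) : Prop :=
  in_zariski_closure h_image x.

Definition vanishes_on_h (c : 'I_d -> R[i]) : Prop :=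
  forall h : 'rV[R[i]]_n, \sum_(i < d) c i * root_eval (proot i) h = 0.

Definition in_Z (x : 'I_d -> R[i] * R[i]) : Prop :=
  forall c : 'I_d -> R[i], vanishes_on_h c -> (mhomogenize c).@[coords x] = 0.

End Main.

(* A linear form vanishing on h, read in the affine chart, is the dehomogenization
   of its multi-homogenization, so hbar lies in Z.  Conversely let x be in Z and T the
   set of its finite coordinates.  The relations P^h supported in T say that the
   finite part of x is the restriction to T of a point u of h; those supported in T
   plus one infinite coordinate k give, by duality, a point of h vanishing on T but
   not at k, and a generic combination w of these vanishes exactly on T.  The points
   u + w / t of h tend to x as t -> 0; along this curve a multihomogeneous polynomial
   becomes, after rescaling, a polynomial in t, so vanishing for t <> 0 propagates to
   x. *)

From HB Require Import structures.
From mathcomp Require Import all_boot all_order all_algebra.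
From mathcomp Require Import reals complex mpoly.

Set Implicit Arguments.
Unset Strict Implicit.
Unset Printing Implicit Defensive.
Import Order.TTheory GRing.Theory Num.Theory.
Local Open Scope ring_scope.

Section MultiProjective.
Variables (C : comNzRingType) (d : nat).
Implicit Types (x y : 'I_d -> C * C) (c : 'I_d -> C) (i : 'I_d).

Lemma pair_of_var0 i : pair_of (var0 i) = i.
Proof. by apply: val_inj; rewrite /= half_double. Qed.

Lemma pair_of_var1 i : pair_of (var1 i) = i.
Proof. by apply: val_inj; rewrite /= uphalf_double. Qed.

Lemma coords_var0 x i : coords x (var0 i) = (x i).1.
Proof. by rewrite /coords /= odd_double pair_of_var0. Qed.

Lemma coords_var1 x i : coords x (var1 i) = (x i).2.
Proof. by rewrite /coords /= odd_double pair_of_var1. Qed.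

Lemma var0_inj : injective (@var0 d).
Proof. by move=> a b /(congr1 val) /= /double_inj /val_inj. Qed.

Lemma var1_inj : injective (@var1 d).
Proof. by move=> a b /(congr1 val) [] /double_inj /val_inj. Qed.

Lemma var1_neq_var0 (a b : 'I_d) : (var1 a == var0 b) = false.
Proof. by apply/negbTE/eqP => /(congr1 (odd \o val)); rewrite /= !odd_double. Qed.

Lemma prod_ord_double (F : nat -> C) n :
  \prod_(k < n.*2) F k = \prod_(i < n) (F i.*2 * F i.*2.+1).
Proof.
elim: n => [|n IH]; first by rewrite !big_ord0.
by rewrite doubleS !big_ord_recr /= IH mulrA.
Qed.

Lemma meval_multihomog_scale e p (lam : 'I_d -> C) x y :
  multihomog e p -> (forall i, y i = (lam i * (x i).1, lam i * (x i).2)) ->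
  p.@[coords y] = (\prod_i lam i ^+ e i) * p.@[coords x].
Proof.
move=> Hp Hy; rewrite !mevalE big_distrr /=; apply: eq_big_seq => m Hm.
rewrite mulrCA; congr (_ * _).
have -> : \prod_(k < d.*2) coords y k ^+ m k =
    \prod_(k < d.*2) lam (pair_of k) ^+ m k * \prod_(k < d.*2) coords x k ^+ m k.
  rewrite -big_split /=; apply: eq_bigr => k _.
  by rewrite /coords Hy -exprMn; case: (odd k).
congr (_ * _).
pose F (k : nat) := oapp (fun o : 'I_(d.*2) => lam (pair_of o) ^+ m o) 1 (insub k).
have FE (k : 'I_(d.*2)) : F k = lam (pair_of k) ^+ m k by rewrite /F valK.
rewrite (eq_bigr _ (fun k _ => esym (FE k))) prod_ord_double; apply: eq_bigr => i _.
rewrite [i.*2]/(val (var0 i) : nat) [i.*2.+1]/(val (var1 i) : nat) !FE.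
by rewrite pair_of_var0 pair_of_var1 -exprD Hp.
Qed.

Lemma meval_mhomogenize c x :
  (mhomogenize c).@[coords x] = \sum_(i | c i != 0)
     c i * ((x i).2 * \prod_(j | (c j != 0) && (j != i)) (x j).1).
Proof.
rewrite /mhomogenize (big_morph (meval (coords x)) (@mevalD _ _ _) (@meval0 _ _ _)).
apply: eq_bigr => i _; rewrite mevalZ mevalM mevalXU coords_var1.
rewrite (big_morph (meval (coords x)) (@mevalM _ _ _) (@meval1 _ _ _)).
by congr (_ * (_ * _)); apply: eq_bigr => j _; rewrite mevalXU coords_var0.
Qed.

Lemma sum_nat_pred1 (P : pred 'I_d) k : (\sum_(j | P j) (j == k : nat))%N = P k.
Proof.
have [Pk|nPk] := boolP (P k).
  by rewrite (bigD1 k) //= eqxx big1 // => j /andP[_ /negbTE ->].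
by rewrite big1 // => j Pj; apply/eqP; rewrite eqb0; apply: contraNneq nPk => <-.
Qed.

Lemma multihomog_sum e (P : pred 'I_d) (F : 'I_d -> {mpoly C[d.*2]}) :
  (forall i, P i -> multihomog e (F i)) -> multihomog e (\sum_(i | P i) F i).
Proof.
move=> HF; apply: big_ind => //; first by move=> m; rewrite msupp0.
by move=> p q Hp Hq m /msuppD_le; rewrite mem_cat => /orP[]; [apply: Hp | apply: Hq].
Qed.

Lemma mhomogenize_multihomog c :
  multihomog (fun i => (c i != 0 : nat)) (mhomogenize c).
Proof.
pose mono i := (U_(var1 i) + \sum_(j | (c j != 0%R) && (j != i)) U_(var0 j))%MM.
have -> : mhomogenize c = \sum_(i | c i != 0) c i *: 'X_[mono i].
  apply: eq_bigr => i _; rewrite mpolyXD; congr (_ *: (_ * _)).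
  by rewrite (big_morph (fun m => 'X_[m] : {mpoly C[d.*2]})
                (@mpolyXD _ _) (@mpolyX0 _ _)).
apply: multihomog_sum => i ci m /msuppZ_le; rewrite msuppX inE => /eqP -> k.
rewrite /mono !mnmDE !mnm_sumE !mnm1E var1_neq_var0 (inj_eq var1_inj).
rewrite (eq_bigr (fun j => (j == k : nat))); last first.
  by move=> j _; rewrite mnm1E (inj_eq var0_inj).
rewrite sum_nat_pred1 big1; last by move=> j _; rewrite mnm1E eq_sym var1_neq_var0.
by have [<-|ik] := eqVneq i k; rewrite /= ?andbF ?ci // andbT add0n !addn0.
Qed.

Lemma in_zariski_closureS (S S' : ('I_d -> C * C) -> Prop) x :
  (forall y, S y -> exists2 y', S' y' & y' =1 y) ->
  in_zariski_closure S x -> in_zariski_closure S' x.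
Proof.
move=> SS' Sx e p Hp Hvan; apply: (Sx e p Hp) => y /SS' [y' S'y' y'y].
by rewrite -(Hvan y' S'y'); apply: meval_eq => k; rewrite /coords y'y.
Qed.

End MultiProjective.

Lemma meval_line_eq0 (F : numFieldType) N (p : {mpoly F[N]}) (a b : 'I_N -> F) :
  (forall t, t != 0 -> p.@[fun k => a k * t + b k] = 0) -> p.@[b] = 0.
Proof.
move=> Hline.
pose Q := \sum_(m <- msupp p) p@_m *: \prod_k ('X * (a k)%:P + (b k)%:P) ^+ m k.
have QE t : Q.[t] = p.@[fun k => a k * t + b k].
  rewrite mevalE horner_sum; apply: eq_bigr => m _; rewrite hornerZ horner_prod.
  by congr (_ * _); apply: eq_bigr => k _; rewrite horner_exp !hornerE mulrC.
have Q0 : Q = 0.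
  apply: (@roots_geq_poly_eq0 _ _ [seq k.+1%:R | k <- iota 0 (size Q)]).
  - by apply/allP => _ /mapP[k _ ->]; apply/rootP; rewrite QE Hline ?pnatr_eq0.
  - by rewrite map_inj_uniq ?iota_uniq // => k l /eqP; rewrite eqr_nat eqSS => /eqP.
  - by rewrite size_map size_iota.
transitivity Q.[0]; last by rewrite Q0 horner0.
by rewrite QE; apply: meval_eq => k; rewrite mulr0 add0r.
Qed.

Lemma kernel_orth_rowspace (F : fieldType) m d (B : 'M[F]_(m, d)) (b : 'rV_d) :
  (forall c : 'cV_d, B *m c = 0 -> b *m c = 0) -> exists u : 'rV_m, b = u *m B.
Proof.
move=> Hb; suff /submxP[u ->] : (b <= B)%MS by exists u.
rewrite submxE; apply/eqP/matrixP => i j.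
have Hcol : b *m col j (cokermx B) = 0.
  by apply: Hb; rewrite colE mulmxA mulmx_coker mul0mx.
by have := congr1 (fun M : 'cV_1 => M i 0) Hcol; rewrite colE mulmxA -colE !mxE.
Qed.

Lemma kernel_orth_rowspace_on (F : fieldType) m d (A : 'M[F]_(m, d))
    (P : pred 'I_d) (b : 'I_d -> F) :
  (forall c : 'cV_d, A *m c = 0 -> (forall i, ~~ P i -> c i 0 = 0) ->
     \sum_i b i * c i 0 = 0) ->
  exists u : 'rV_m, forall i, P i -> (u *m A) 0 i = b i.
Proof.
move=> Hb.
pose AP := \matrix_(j, i) (if P i then A j i else 0).
pose bP := \row_i (if P i then b i else 0).
have APE (u : 'rV_m) i : (u *m AP) 0 i = if P i then (u *m A) 0 i else 0.
  rewrite mxE (eq_bigr (fun j => if P i then u 0 j * A j i else 0)).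
    by case: (P i); [rewrite mxE | rewrite big1].
  by move=> j _; rewrite mxE; case: (P i); rewrite ?mulr0.
have [u buAP] : exists u : 'rV_m, bP = u *m AP.
  apply: kernel_orth_rowspace => c APc.
  pose cP := \col_i (if P i then c i 0 else 0).
  have AcP : A *m cP = AP *m c.
    apply/matrixP => j k; rewrite !mxE; apply: eq_bigr => i _.
    by rewrite !mxE (ord1 k); case: (P i); rewrite ?mulr0 ?mul0r.
  apply/matrixP => i0 j0; rewrite (ord1 i0) (ord1 j0) !mxE.
  transitivity (\sum_i b i * cP i 0).
    by apply: eq_bigr => i _; rewrite !mxE; case: (P i); rewrite ?mul0r ?mulr0.
  by apply: Hb; [rewrite AcP | move=> i /negbTE Pi; rewrite mxE Pi].
exists u => i Pi; have := congr1 (fun v : 'rV_d => v 0 i) buAP.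
by rewrite /= APE Pi mxE Pi.
Qed.

Lemma exists_notin (F : numFieldType) (s : seq F) : exists t, t \notin s.
Proof.
exists (1 + \sum_(y <- s) `|y|); set t := 1 + _; apply/negP => ts.
have : `|t| <= \sum_(y <- s) `|y| by rewrite (big_rem t ts) /= lerDl sumr_ge0.
by rewrite ger0_norm ?addr_ge0 ?sumr_ge0 // gerDr ler10.
Qed.

Lemma rowspace_avoid (F : numFieldType) m d (A : 'M[F]_(m, d)) (T : pred 'I_d) :
  (forall k, ~~ T k -> exists2 v : 'rV_m,
     forall i, T i -> (v *m A) 0 i = 0 & (v *m A) 0 k != 0) ->
  exists2 w : 'rV_m,
    forall i, T i -> (w *m A) 0 i = 0 & forall k, ~~ T k -> (w *m A) 0 k != 0.
Proof.
move=> Hv; suff [w w0 wT] : exists2 w : 'rV_m, forall i, T i -> (w *m A) 0 i = 0 &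
    forall k, k \in enum (predC T) -> (w *m A) 0 k != 0.
  by exists w => // k Tk; apply: wT; rewrite mem_enum.
have : all (predC T) (enum (predC T)) by apply/allP => k; rewrite mem_enum.
elim: (enum _) => [_|k s IH] /=.
  by exists 0 => // i _; rewrite mul0mx mxE.
case/andP => Tk /IH[w w0 ws]; have [v v0 vk] := Hv k Tk.
have [t tN] := exists_notin [seq - ((w *m A) 0 j / (v *m A) 0 j) | j <- k :: s].
have wtvE j : ((w + t *: v) *m A) 0 j = (w *m A) 0 j + t * (v *m A) 0 j.
  by rewrite mulmxDl -scalemxAl !mxE.
exists (w + t *: v) => [i Ti | j js]; first by rewrite wtvE w0 ?v0 ?mulr0 ?addr0.
rewrite wtvE; have [vj0|vj] := eqVneq ((v *m A) 0 j) 0.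
  rewrite vj0 mulr0 addr0; apply: ws.
  by move: js; rewrite inE => /predU1P[jk|//]; move: vk; rewrite -jk vj0 eqxx.
apply: contra tN => /eqP wtv; apply/mapP; exists j => //.
by apply: (mulIf vj); rewrite mulNr divfK //; apply/eqP; rewrite -addr_eq0 addrC wtv.
Qed.

Section LinearImage.
Variables (F : numFieldType) (n d : nat) (A : 'M[F]_(n, d)).
Implicit Types (x y : 'I_d -> F * F) (c : 'I_d -> F).

Definition image_pt (u : 'rV[F]_n) : 'I_d -> F * F :=
  affine_pt (fun i => (u *m A) 0 i).

Definition in_image y : Prop := exists u, y = image_pt u.

Definition annihilates_image c : Prop :=
  forall u : 'rV_n, \sum_i c i * (u *m A) 0 i = 0.

Definition in_image_Z x : Prop :=
  forall c, annihilates_image c -> (mhomogenize c).@[coords x] = 0.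

Lemma annihilates_image_ker (c : 'cV_d) :
  A *m c = 0 -> annihilates_image (fun i => c i 0).
Proof.
move=> Ac u; have := congr1 (fun M : 'cV_1 => M 0 0) (congr1 (mulmx u) Ac).
rewrite /= mulmxA mulmx0 !mxE => E; rewrite -[RHS]E.
by apply: eq_bigr => i _; rewrite mulrC.
Qed.

Lemma in_image_Z_closure x : in_zariski_closure in_image x -> in_image_Z x.
Proof.
move=> Hx c Hc; apply: (Hx _ _ (@mhomogenize_multihomog _ _ c)) => _ [u ->].
rewrite meval_mhomogenize -[RHS](Hc u) [RHS](bigID (fun i => c i != 0)) /=.
rewrite [X in _ = _ + X]big1 ?addr0 => [|i /negPn/eqP ->]; last by rewrite mul0r.
by apply: eq_bigr => i _; rewrite big1_eq mulr1.
Qed.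

Section ZeroLocusInClosure.
Variable x : 'I_d -> F * F.
Hypotheses (x_pt : P1d_point x) (xZ : in_image_Z x).

Let finite i := (x i).1 != 0.
Let slope i := (x i).2 / (x i).1.

Lemma Z_finite_support (c : 'cV_d) :
  A *m c = 0 -> (forall i, ~~ finite i -> c i 0 = 0) ->
  \sum_i slope i * c i 0 = 0.
Proof.
move=> Ac c_fin; have := xZ (annihilates_image_ker Ac); rewrite meval_mhomogenize.
have supp_fin i : c i 0 != 0 -> finite i.
  by apply: contraR => /c_fin ->; rewrite eqxx.
pose P := \prod_(j | c j 0 != 0) (x j).1.
rewrite (eq_bigr (fun i => slope i * c i 0 * P)) => [|i ci]; last first.
  rewrite /P (bigD1 i ci) /= /slope [RHS]mulrA -[in RHS](mulrAC _ (x i).1).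
  by rewrite (divfK (supp_fin i ci)) mulrCA mulrA.
have P0 : P != 0 by apply/prodf_neq0 => j /supp_fin.
rewrite -big_distrl /= => /eqP; rewrite mulf_eq0 (negbTE P0) orbF => /eqP E.
rewrite (bigID (fun i => c i 0 != 0)) /= E add0r big1 // => i /negPn/eqP ->.
by rewrite mulr0.
Qed.

Lemma Z_one_infinite (c : 'cV_d) k :
  A *m c = 0 -> ~~ finite k -> (forall i, ~~ finite i -> i != k -> c i 0 = 0) ->
  c k 0 = 0.
Proof.
move=> Ac k_inf c_fin; have [//|ck] := eqVneq (c k 0) 0; exfalso.
have := xZ (annihilates_image_ker Ac); rewrite meval_mhomogenize (bigD1 k ck) /=.
rewrite [X in _ + X]big1 ?addr0 => [|i /andP[ci ik]]; last first.
  by rewrite (bigD1 k) /= ?ck 1?eq_sym ?ik // (eqP (negbNE k_inf)) mul0r !mulr0.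
have xk2 : (x k).2 != 0 by case: (x_pt k) => // xk1; rewrite /finite xk1 in k_inf.
have P0 : \prod_(j | (c j 0 != 0) && (j != k)) (x j).1 != 0.
  apply/prodf_neq0 => j /andP[cj jk].
  by apply: contraR cj => /c_fin/(_ jk) ->; rewrite eqxx.
by move/eqP; rewrite !mulf_eq0 (negbTE ck) (negbTE xk2) (negbTE P0).
Qed.

Lemma finite_part_in_image :
  exists u : 'rV_n, forall i, finite i -> (u *m A) 0 i = slope i.
Proof. by apply: kernel_orth_rowspace_on => c; apply: Z_finite_support. Qed.

Lemma infinite_part_in_image : exists2 w : 'rV_n,
  forall i, finite i -> (w *m A) 0 i = 0 & forall k, ~~ finite k -> (w *m A) 0 k != 0.
Proof.
apply: rowspace_avoid => k k_inf.
have [v vE] : exists v : 'rV_n,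
    forall i, finite i || (i == k) -> (v *m A) 0 i = (i == k)%:R.
  apply: kernel_orth_rowspace_on => c Ac c_fk.
  rewrite (bigD1 k) //= eqxx mul1r big1 ?addr0 => [|i ik].
    apply: Z_one_infinite Ac k_inf _ => i i_inf ik.
    by apply: c_fk; rewrite negb_or i_inf.
  by rewrite (negbTE ik) mul0r.
exists v => [i i_fin|]; last by rewrite vE ?eqxx ?orbT ?oner_neq0.
have ik : i != k by apply: contraNneq k_inf => <-.
by rewrite vE ?i_fin // (negbTE ik).
Qed.

Lemma Z_in_closure : in_zariski_closure in_image x.
Proof.
have [u u_fin] := finite_part_in_image.
have [w w_fin w_inf] := infinite_part_in_image.
pose U i : F := (u *m A) 0 i; pose W i : F := (w *m A) 0 i.
pose y t i : F * F := if finite i then (1, U i) else (t, t * U i + W i).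
pose x0 i : F * F := if finite i then (1, U i) else (0, W i).
pose dir i : F * F := if finite i then (0, 0) else (1, U i).
(* [y t] is the point [image_pt (u + t^-1 *: w)] with its infinite coordinates
   rescaled by [t]; it moves along a line and reaches [x0] at [t = 0], and [x0]
   is [x] up to rescaling. *)
move=> e p p_hom p_image.
have y_vanish t : t != 0 -> p.@[coords (y t)] = 0.
  move=> t0; rewrite (@meval_multihomog_scale _ _ e p
                 (fun i => if finite i then 1 else t) (image_pt (u + t^-1 *: w))) //.
    by rewrite p_image ?mulr0 //; exists (u + t^-1 *: w).
  move=> i; rewrite /y /image_pt /=.
  have -> : ((u + t^-1 *: w) *m A) 0 i = U i + t^-1 * W i.
    by rewrite mulmxDl -scalemxAl [LHS]mxE [X in _ + X]mxE.
  case: ifP => i_fin; first by rewrite /W w_fin // mulr0 addr0 !mul1r.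
  by rewrite mulr1 mulrDr mulrA divff // mul1r.
have x0_vanish : p.@[coords x0] = 0.
  apply: (@meval_line_eq0 _ _ p (coords dir)) => t t0; rewrite -(y_vanish t t0).
  apply: meval_eq => k; rewrite /coords /y /dir /x0.
  by case: (finite _); case: (odd k); rewrite /= ?mul0r ?add0r ?mul1r ?addr0 // mulrC.
rewrite (@meval_multihomog_scale _ _ e p
           (fun i => if finite i then (x i).1 else (x i).2 / W i) x0) //.
  by rewrite x0_vanish mulr0.
move=> i; rewrite /x0; case: ifP => i_fin /=.
  by rewrite mulr1 /U u_fin // /slope mulrC divfK //; case: (x i).
have x1 : (x i).1 = 0 by apply/eqP; move/negbT: i_fin; rewrite negbK.
by rewrite mulr0 divfK ?w_inf ?i_fin //; case: (x i) x1 => ? ? /= ->.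
Qed.

End ZeroLocusInClosure.

Lemma in_image_ZE x : P1d_point x -> in_image_Z x <-> in_zariski_closure in_image x.
Proof. by move=> x_pt; split; [apply: Z_in_closure | apply: in_image_Z_closure]. Qed.

End LinearImage.

Section PositiveRoots.
Variables (R : realType) (n : nat) (Phi : seq 'rV[R]_n) (f : 'rV[R]_n).
Local Notation d := (size (pos_roots Phi f)).

Definition root_matrix : 'M[R[i]]_(n, d) :=
  \matrix_(j, i) Complex ((@proot R n Phi f i) 0 j) 0.

Lemma root_evalE h i : root_eval (@proot R n Phi f i) h = (h *m root_matrix) 0 i.
Proof. by rewrite /root_eval mxE; apply: eq_bigr => j _; rewrite mxE mulrC. Qed.

Lemma in_ZE x : @in_Z R n Phi f x <-> in_image_Z root_matrix x.
Proof.
have vanE c : @vanishes_on_h R n Phi f c <-> annihilates_image root_matrix c.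
  by split=> Hc h; rewrite -[RHS](Hc h);
    apply: eq_bigr => i _; rewrite (root_evalE h i).
by split=> Hx c /vanE; apply: Hx.
Qed.

Lemma in_hbarE x :
  @in_hbar R n Phi f x <-> in_zariski_closure (in_image root_matrix) x.
Proof.
have embedE h i : @h_embed R n Phi f h i = image_pt root_matrix h i.
  by rewrite /h_embed /image_pt /affine_pt root_evalE.
split; apply: in_zariski_closureS => _ [h ->].
  by exists (image_pt root_matrix h) => [|i]; [exists h | rewrite embedE].
by exists (@h_embed R n Phi f h) => [|i]; [exists h | rewrite embedE].
Qed.

End PositiveRoots.

Theorem mainTheorem4 (R : realType) (n : nat) (Phi : seq 'rV[R]_n)
    (f : 'rV[R]_n) :
  is_root_system Phi -> regular_for Phi f ->
  forall x : 'I_(size (pos_roots Phi f)) -> R[i] * R[i],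
    P1d_point x ->
    (@in_Z R n Phi f x <-> @in_hbar R n Phi f x).
Proof. by move=> _ _ x x_pt; rewrite in_ZE in_hbarE; apply: in_image_ZE. Qed.
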